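(* Let $K:\ell^2\to\mathcal{H}$ be a bounded, linear and injective operator into a real Hilbert space $\mathcal{H}$, let $f\in\mathcal{H}$, let $w=(w_k)_{k\in\mathbb{N}}$ be a sequence with $w_k\ge w_0>0$ for all $k$, and fix $\gamma>0$. Let $\bar u\in\ell^2$ be the unique minimizer of $\Psi(u)=\frac12\|Ku-f\|_{\mathcal{H}}^2+\sum_{k=1}^\infty w_k|u_k|$ over $\ell^2$. Define $\mathcal{F}:\ell^2\to\ell^2$ by $\mathcal{F}(u)=u-\mathcal{S}_{\gamma w}(u-\gamma K^*(Ku-f))$, and for $u\in\ell^2$ let $\mathcal{A}(u)=\{k\in\mathbb{N}: |u-\gamma K^*(Ku-f)|_k>\gamma w_k\}$, $P_{\mathcal{A}(u)}$ the coordinate projection onto the indices in $\mathcal{A}(u)$, and $\mathcal{G}(u)=(I-P_{\mathcal{A}(u)})+\gamma P_{\mathcal{A}(u)}K^*K\in L(\ell^2,\ell^2)$. Let $\rho>0$ and $k_0\in\mathbb{N}$ be such that $\|u-\bar u\|<\rho$ implies $\mathcal{A}(u)\subset\{1,\dots,k_0\}$ (such $\rho,k_0$ exist). Then there exists $r\in(0,\rho]$ such that for every $u^0\in\ell^2$ with $\|u^0-\bar u\|<r$, the semismooth Newton iteration $u^{n+1}=u^n-\mathcal{G}(u^n)^{-1}\mathcal{F}(u^n)$, $n=0,1,2,\dots$, is well defined, all iterates satisfy $\|u^n-\bar u\|<r$, and $u^n\to\bar u$ superlinearly, i.e. $\|u^{n+1}-\bar u\|=o(\|u^n-\bar u\|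)$.
   Context: $\ell^2$ is the Hilbert space of real square-summable sequences with norm $\|\cdot\|$; $K^*$ is the Hilbert space adjoint of $K$. For a sequence $v=(v_k)$ with $v_k>0$, the soft-thresholding operator is $\mathcal{S}_{v}(u)_k=\max\{0,|u_k|-v_k\}\,\mathrm{sgn}(u_k)$; $\gamma w$ denotes the sequence $(\gamma w_k)$. $|x|_k$ denotes $|x_k|$. *)

From Stdlib Require Import Reals Lra.
From Coquelicot Require Import Coquelicot.
Open Scope R_scope.

(** Real sequences, indexed by nat (index 0 plays the role of the paper's 1). *)
Definition seqR := nat -> R.

Definition in_l2 (u : seqR) : Prop := ex_series (fun k => (u k) ^ 2).
Definition l2norm (u : seqR) : R := sqrt (Series (fun k => (u k) ^ 2)).

Definition sadd (u v : seqR) : seqR := fun k => u k + v k.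
Definition ssub (u v : seqR) : seqR := fun k => u k - v k.
Definition sscal (a : R) (u : seqR) : seqR := fun k => a * u k.

Definition unitv (k : nat) : seqR := fun j => if Nat.eq_dec j k then 1 else 0.

Record HilbertSpace := mkHilbert {
  hcar :> Type;
  hzero : hcar;
  hadd : hcar -> hcar -> hcar;
  hopp : hcar -> hcar;
  hscal : R -> hcar -> hcar;
  hinner : hcar -> hcar -> R;
  hadd_assoc : forall x y z, hadd x (hadd y z) = hadd (hadd x y) z;
  hadd_comm : forall x y, hadd x y = hadd y x;
  hadd_0 : forall x, hadd x hzero = x;
  hadd_opp : forall x, hadd x (hopp x) = hzero;
  hscal_1 : forall x, hscal 1 x = x;
  hscal_assoc : forall a b x, hscal a (hscal b x) = hscal (a * b) x;
  hscal_distr_l : forall a x y, hscal a (hadd x y) = hadd (hscal a x) (hscal a y);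
  hscal_distr_r : forall a b x, hscal (a + b) x = hadd (hscal a x) (hscal b x);
  hinner_sym : forall x y, hinner x y = hinner y x;
  hinner_add_l : forall x y z, hinner (hadd x y) z = hinner x z + hinner y z;
  hinner_scal_l : forall a x y, hinner (hscal a x) y = a * hinner x y;
  hinner_pos : forall x, 0 <= hinner x x;
  hinner_def : forall x, hinner x x = 0 -> x = hzero;
  hcomplete : forall s : nat -> hcar,
    (forall eps, 0 < eps -> exists N, forall m n, (N <= m)%nat -> (N <= n)%nat ->
       sqrt (hinner (hadd (s m) (hopp (s n))) (hadd (s m) (hopp (s n)))) < eps) ->
    exists l, forall eps, 0 < eps -> exists N, forall n, (N <= n)%nat ->
       sqrt (hinner (hadd (s n) (hopp l)) (hadd (s n) (hopp l))) < eps
}.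

Arguments hzero {_}. Arguments hadd {_}. Arguments hopp {_}.
Arguments hscal {_}. Arguments hinner {_}.

Definition hsub {H : HilbertSpace} (x y : H) : H := hadd x (hopp y).
Definition hnorm {H : HilbertSpace} (x : H) : R := sqrt (hinner x x).

Section Ops.
Context {H : HilbertSpace} (K : seqR -> H) (f : H).

(** K : l^2 -> H bounded linear (only its values on l^2 matter). *)
Definition bounded_linear_l2 : Prop :=
  (forall u v, in_l2 u -> in_l2 v -> K (sadd u v) = hadd (K u) (K v)) /\
  (forall a u, in_l2 u -> K (sscal a u) = hscal a (K u)) /\
  (exists C, forall u, in_l2 u -> hnorm (K u) <= C * l2norm u).

Definition injective_l2 : Prop :=
  forall u v, in_l2 u -> in_l2 v -> K u = K v -> u = v.

(** Hilbert adjoint K^* : H -> l^2, in coordinates: (K^* h)_k = <K e_k, h>. *)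
Definition adj (h : H) : seqR := fun k => hinner (K (unitv k)) h.

Definition sgn (x : R) : R :=
  if Rlt_dec 0 x then 1 else if Rlt_dec x 0 then -1 else 0.
Definition soft (v u : seqR) : seqR :=
  fun k => Rmax 0 (Rabs (u k) - v k) * sgn (u k).

Definition penalty_finite (w u : seqR) : Prop :=
  ex_series (fun k => w k * Rabs (u k)).
Definition Psi (w u : seqR) : R :=
  / 2 * (hnorm (hsub (K u) f)) ^ 2 + Series (fun k => w k * Rabs (u k)).

(** ub minimizes Psi over l^2 (Psi = +oo where the penalty series diverges). *)
Definition is_minimizer (w ub : seqR) : Prop :=
  in_l2 ub /\ penalty_finite w ub /\
  forall u, in_l2 u -> penalty_finite w u -> Psi w ub <= Psi w u.

Definition fwd (gamma : R) (u : seqR) : seqR :=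
  fun k => u k - gamma * adj (hsub (K u) f) k.

Definition Fmap (gamma : R) (w u : seqR) : seqR :=
  ssub u (soft (sscal gamma w) (fwd gamma u)).

Definition active (gamma : R) (w u : seqR) (k : nat) : Prop :=
  Rabs (fwd gamma u k) > gamma * w k.

Definition Gop (gamma : R) (w u : seqR) (v : seqR) : seqR :=
  fun k => if Rlt_dec (gamma * w k) (Rabs (fwd gamma u k))
           then gamma * adj (K v) k
           else v k.
End Ops.

(** T is invertible as a bounded operator on l^2: maps l^2 into l^2,
    is onto l^2, and is bounded below (so its inverse is bounded). *)
Definition invertible_l2 (T : seqR -> seqR) : Prop :=
  (forall v, in_l2 v -> in_l2 (T v)) /\
  (forall v, in_l2 v -> exists u, in_l2 u /\ T u = v) /\
  (exists C, 0 < C /\ forall v, in_l2 v -> l2norm v <= C * l2norm (T v)).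

From Stdlib Require Import Reals Lra Lia FunctionalExtensionality.
From Coquelicot Require Import Coquelicot.
Open Scope R_scope.

(* Near the minimizer the soft-thresholding pattern is frozen. By the first-order
   optimality conditions, for every u close to ub the active set A(u) contains the
   support of ub, and on A(u) the sign of the forward point u - gamma K^*(Ku - f)
   reproduces the subgradient -K^*(K ub - f) / w. Hence F(u) = G(u)(u - ub) holds
   exactly, so one Newton step from such a u lands on ub, which is a fixed point of the
   iteration, and superlinear convergence is immediate. G(u) is invertible because
   A(u) is finite: there K^*K is the Gram matrix of the vectors K e_k, linearly
   independent by injectivity, and the Gram system is solved by induction on the
   number of indices, orthogonalizing each new K e_n against the previous ones. *)

Section HilbertAlgebra.
Context {H : HilbertSpace}.
Implicit Types x y z : H.

Lemma hscal_0 x : hscal 0 x = hzero.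
Proof.
  set (x0 := hscal 0 x).
  assert (E : hadd x0 x0 = x0) by (unfold x0; rewrite <- hscal_distr_r; f_equal; lra).
  rewrite <- (hadd_opp H x0). rewrite <- E at 2.
  rewrite <- hadd_assoc, hadd_opp, hadd_0. reflexivity.
Qed.

Lemma hopp_scal x : hopp x = hscal (-1) x.
Proof.
  rewrite <- (hadd_0 H (hscal (-1) x)), <- (hadd_opp H x), hadd_assoc.
  rewrite <- (hscal_1 H x) at 3. rewrite <- hscal_distr_r.
  replace (-1 + 1) with 0 by lra. rewrite hscal_0, hadd_comm, hadd_0. reflexivity.
Qed.

Lemma hinner_add_r x y z : hinner x (hadd y z) = hinner x y + hinner x z.
Proof. rewrite hinner_sym, hinner_add_l, (hinner_sym _ y), (hinner_sym _ z). reflexivity. Qed.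

Lemma hinner_scal_r a x y : hinner x (hscal a y) = a * hinner x y.
Proof. rewrite hinner_sym, hinner_scal_l, hinner_sym. reflexivity. Qed.

Lemma hinner_sub_r x y z : hinner x (hsub y z) = hinner x y - hinner x z.
Proof. unfold hsub. rewrite hinner_add_r, hopp_scal, hinner_scal_r. ring. Qed.

Lemma hinner_zero_l y : hinner hzero y = 0.
Proof. rewrite <- (hscal_0 y), hinner_scal_l. ring. Qed.

Lemma hnorm_sq x : hnorm x ^ 2 = hinner x x.
Proof. apply pow2_sqrt, hinner_pos. Qed.

Lemma hnorm_ge0 x : 0 <= hnorm x.
Proof. apply sqrt_pos. Qed.

Lemma quadratic_nonneg_discr a b c : 0 <= c ->
  (forall t, 0 <= a + 2 * b * t + c * t ^ 2) -> b ^ 2 <= a * c.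
Proof.
  intros Hc Ht. destruct (Rle_lt_or_eq_dec 0 c Hc) as [Hc'|<-].
  - specialize (Ht (- b / c)).
    replace (a + 2 * b * (- b / c) + c * (- b / c) ^ 2) with ((a * c - b ^ 2) / c) in Ht
      by (field; lra).
    apply Rmult_le_compat_r with (r := c) in Ht; [|lra].
    unfold Rdiv in Ht. rewrite Rmult_assoc, Rinv_l in Ht; lra.
  - destruct (Req_dec b 0) as [->|Hb]; [specialize (Ht 0); nra|].
    specialize (Ht (- (Rabs a + 1) / (2 * b))).
    replace (a + 2 * b * (- (Rabs a + 1) / (2 * b)) + 0 * (- (Rabs a + 1) / (2 * b)) ^ 2)
      with (a - (Rabs a + 1)) in Ht by (field; lra).
    pose proof (Rle_abs a). lra.
Qed.

Lemma cauchy_schwarz x y : Rabs (hinner x y) <= hnorm x * hnorm y.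
Proof.
  assert (Hsq : hinner x y ^ 2 <= hinner x x * hinner y y).
  { apply quadratic_nonneg_discr; [apply hinner_pos|]. intro t.
    pose proof (hinner_pos H (hadd x (hscal t y))) as P.
    rewrite hinner_add_l, !hinner_add_r, !hinner_scal_l, !hinner_scal_r,
      (hinner_sym _ y x) in P. nra. }
  rewrite <- (sqrt_pow2 (Rabs _)) by apply Rabs_pos.
  unfold hnorm. rewrite <- sqrt_mult by apply hinner_pos.
  apply sqrt_le_1_alt. rewrite <- Rsqr_pow2, <- Rsqr_abs, Rsqr_pow2. exact Hsq.
Qed.

End HilbertAlgebra.

(** * Finite sums and sequences in l^2 *)

Fixpoint fsum (g : nat -> R) (n : nat) : R :=
  match n with O => 0 | S m => fsum g m + g m end.

Lemma fsum_ext g h n : (forall j, (j < n)%nat -> g j = h j) -> fsum g n = fsum h n.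
Proof.
  induction n as [|n IH]; simpl; intros E; [reflexivity|].
  rewrite IH, E by (try intros; try apply E; lia). reflexivity.
Qed.

Lemma fsum_zero g n : (forall j, (j < n)%nat -> g j = 0) -> fsum g n = 0.
Proof.
  intros E. rewrite (fsum_ext g (fun _ => 0)) by exact E. clear E.
  induction n as [|n IH]; simpl; lra.
Qed.

Lemma fsum_single g n j : (j < n)%nat -> (forall m, m <> j -> g m = 0) -> fsum g n = g j.
Proof.
  induction n as [|n IH]; simpl; intros Hj Hz; [lia|].
  destruct (Nat.eq_dec j n) as [->|Hne].
  - rewrite fsum_zero by (intros; apply Hz; lia). lra.
  - rewrite IH, (Hz n); [lra | congruence | lia | exact Hz].
Qed.

Lemma fsum_scal c g n : fsum (fun j => c * g j) n = c * fsum g n.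
Proof. induction n as [|n IH]; simpl; [|rewrite IH]; lra. Qed.

Lemma fsum_le g h n : (forall j, (j < n)%nat -> g j <= h j) -> fsum g n <= fsum h n.
Proof.
  induction n as [|n IH]; simpl; intros E; [lra|].
  specialize (IH ltac:(intros; apply E; lia)). specialize (E n ltac:(lia)). lra.
Qed.

Lemma fsum_nonneg g n : (forall j, 0 <= g j) -> 0 <= fsum g n.
Proof. intros E. rewrite <- (fsum_zero (fun _ => 0) n) by auto. apply fsum_le; auto. Qed.

Lemma fsum_le_const g n X : (forall j, (j < n)%nat -> g j <= X) -> fsum g n <= INR n * X.
Proof.
  intros E. replace (INR n * X) with (fsum (fun _ => X) n); [apply fsum_le; exact E|].
  induction n as [|n IH]; simpl fsum; [simpl; ring|]. rewrite IH, S_INR; [ring|].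
  intros; apply E; lia.
Qed.

Lemma fsum_abs g n : Rabs (fsum g n) <= fsum (fun j => Rabs (g j)) n.
Proof.
  induction n as [|n IH]; simpl; [rewrite Rabs_R0; lra|].
  eapply Rle_trans; [apply Rabs_triang|lra].
Qed.

Lemma sum_n_fsum a m : sum_n a m = fsum a (S m).
Proof.
  induction m as [|m IH]; [rewrite sum_O; simpl; lra|].
  rewrite sum_Sn, IH. reflexivity.
Qed.

Lemma is_series_fin a n : (forall j, (n <= j)%nat -> a j = 0) -> is_series a (fsum a n).
Proof.
  intros Hz. unfold is_series.
  apply filterlim_ext_loc with (f := fun _ => fsum a n); [|apply filterlim_const].
  exists n. intros m Hm. rewrite sum_n_fsum. symmetry.
  assert (Hm' : (n <= S m)%nat) by lia. clear Hm. induction Hm' as [|m' Hm' IH]; auto.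
  simpl. rewrite IH, Hz by lia. lra.
Qed.

Lemma Series_fin a n : (forall j, (n <= j)%nat -> a j = 0) -> Series a = fsum a n.
Proof. intros; apply is_series_unique, is_series_fin; auto. Qed.

Lemma ex_series_fin a n : (forall j, (n <= j)%nat -> a j = 0) -> ex_series a.
Proof. intros; eexists; apply is_series_fin; eauto. Qed.

Lemma ex_series_tail (a b : nat -> R) n :
  ex_series a -> (forall j, (n <= j)%nat -> b j = a j) -> ex_series b.
Proof.
  intros Ha Hb. apply (ex_series_incr_n b n). apply (ex_series_incr_n a n) in Ha.
  revert Ha. apply ex_series_ext. intros; rewrite Hb by lia; reflexivity.
Qed.

Lemma in_l2_tail u v n : in_l2 u -> (forall j, (n <= j)%nat -> v j = u j) -> in_l2 v.
Proof. intros Hu Hv. apply (ex_series_tail _ _ n Hu). intros j Hj; rewrite Hv; auto. Qed.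

Lemma in_l2_fin v n : (forall j, (n <= j)%nat -> v j = 0) -> in_l2 v.
Proof. intros Hv. apply ex_series_fin with n. intros; rewrite Hv by auto; ring. Qed.

Lemma in_l2_le u v : in_l2 u -> (forall j, v j ^ 2 <= u j ^ 2) -> in_l2 v.
Proof.
  intros Hu Hv. apply (@ex_series_le R_AbsRing R_CompleteNormedModule _ (fun j => u j ^ 2));
    [|exact Hu].
  intros j. change norm with Rabs. rewrite Rabs_pos_eq by apply pow2_ge_0. apply Hv.
Qed.

Lemma in_l2_sadd u v : in_l2 u -> in_l2 v -> in_l2 (sadd u v).
Proof.
  intros Hu Hv. apply (@ex_series_le R_AbsRing R_CompleteNormedModule _
    (fun j => 2 * u j ^ 2 + 2 * v j ^ 2)).
  - intros j. change norm with Rabs. unfold sadd.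
    rewrite Rabs_pos_eq by apply pow2_ge_0. pose proof (pow2_ge_0 (u j - v j)). nra.
  - apply (ex_series_plus (V := R_NormedModule));
      apply (ex_series_scal_l (V := R_NormedModule)); assumption.
Qed.

Lemma in_l2_sscal a u : in_l2 u -> in_l2 (sscal a u).
Proof.
  intros Hu. apply ex_series_ext with (a := fun j => a ^ 2 * u j ^ 2).
  - intros; unfold sscal; simpl; ring.
  - apply (ex_series_scal_l (V := R_NormedModule)), Hu.
Qed.

Lemma ssub_sadd u v : ssub u v = sadd u (sscal (-1) v).
Proof. apply functional_extensionality; intro; unfold ssub, sadd, sscal; ring. Qed.

Lemma in_l2_ssub u v : in_l2 u -> in_l2 v -> in_l2 (ssub u v).
Proof. intros; rewrite ssub_sadd. auto using in_l2_sadd, in_l2_sscal. Qed.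

Lemma in_l2_unitv k : in_l2 (unitv k).
Proof. apply in_l2_fin with (S k). intros; unfold unitv; destruct Nat.eq_dec; [lia|auto]. Qed.

Lemma l2norm_ge0 u : 0 <= l2norm u.
Proof. apply sqrt_pos. Qed.

Lemma Series_sq_ge0 u : in_l2 u -> 0 <= Series (fun j => u j ^ 2).
Proof.
  intros Hu. rewrite <- (is_series_unique (fun _ => 0) 0) 
    by (apply (is_series_fin _ 0); reflexivity).
  apply Series_le; auto. intros; split; [lra | apply pow2_ge_0].
Qed.

Lemma l2norm_sq u : in_l2 u -> l2norm u ^ 2 = Series (fun j => u j ^ 2).
Proof. intros; apply pow2_sqrt, Series_sq_ge0; auto. Qed.

Lemma l2norm_ssub_diag u : l2norm (ssub u u) = 0.
Proof.
  unfold l2norm. rewrite (Series_fin _ 0); [apply sqrt_0|].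
  intros; unfold ssub; ring.
Qed.

Lemma coord_le_l2norm u k : in_l2 u -> Rabs (u k) <= l2norm u.
Proof.
  intros Hu. unfold l2norm. rewrite <- (sqrt_pow2 (Rabs (u k))) by apply Rabs_pos.
  apply sqrt_le_1_alt. rewrite <- Rsqr_pow2, <- Rsqr_abs, Rsqr_pow2.
  set (e := fun j => if Nat.eq_dec j k then u k ^ 2 else 0).
  replace (u k ^ 2) with (Series e).
  - apply Series_le; auto. intros j. unfold e.
    destruct Nat.eq_dec; subst; split; try lra; apply pow2_ge_0.
  - rewrite (Series_fin _ (S k)), (fsum_single _ _ k); unfold e; try lia;
      intros; destruct Nat.eq_dec; congruence || lia.
Qed.

Lemma l2norm_le_coordwise u v : in_l2 u -> (forall j, v j ^ 2 <= u j ^ 2) -> l2norm v <= l2norm u.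
Proof.
  intros Hu Hv. apply sqrt_le_1_alt, Series_le; [|exact Hu].
  intros j; split; [apply pow2_ge_0 | apply Hv].
Qed.

Lemma finite_common_radius (Q : nat -> R -> Prop) n :
  (forall k, (k < n)%nat -> exists d, 0 < d /\ Q k d) ->
  (forall k d d', 0 < d' <= d -> Q k d -> Q k d') ->
  exists d, 0 < d /\ forall k, (k < n)%nat -> Q k d.
Proof.
  intros Hex Hmon. induction n as [|n IH].
  - exists 1. split; [lra | intros; lia].
  - destruct IH as [d [Hd Hq]]; [intros; apply Hex; lia|].
    destruct (Hex n ltac:(lia)) as [d' [Hd' Hq']].
    assert (Hm : 0 < Rmin d d') by (apply Rmin_glb_lt; auto).
    exists (Rmin d d'). split; [exact Hm|]. intros k Hk.
    destruct (Nat.eq_dec k n) as [->|Hne].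
    + apply (Hmon n d'); [split; [exact Hm | apply Rmin_r] | exact Hq'].
    + apply (Hmon k d); [split; [exact Hm | apply Rmin_l] | apply Hq; lia].
Qed.

Lemma finite_common_bound (Q : nat -> R -> Prop) n :
  (forall k, (k < n)%nat -> exists M, 0 <= M /\ Q k M) ->
  (forall k M M', M <= M' -> Q k M -> Q k M') ->
  exists M, 0 <= M /\ forall k, (k < n)%nat -> Q k M.
Proof.
  intros Hex Hmon. induction n as [|n IH].
  - exists 0. split; [lra | intros; lia].
  - destruct IH as [M [HM Hq]]; [intros; apply Hex; lia|].
    destruct (Hex n ltac:(lia)) as [M' [HM' Hq']].
    exists (Rmax M M'). split; [apply (Rle_trans _ M); [exact HM | apply Rmax_l]|].
    intros k Hk. destruct (Nat.eq_dec k n) as [->|Hne].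
    + apply (Hmon n M'); [apply Rmax_r | exact Hq'].
    + apply (Hmon k M); [apply Rmax_l | apply Hq; lia].
Qed.

(** * The Gram system of [K] on finitely many coordinates *)

Section GramSystem.
Context {H : HilbertSpace}.
Variable K : seqR -> H.
Hypothesis K_add : forall u v, in_l2 u -> in_l2 v -> K (sadd u v) = hadd (K u) (K v).
Hypothesis K_scal : forall a u, in_l2 u -> K (sscal a u) = hscal a (K u).
Hypothesis K_inj : injective_l2 K.

Lemma K_zero : K (fun _ => 0) = hzero.
Proof.
  replace (fun _ : nat => 0) with (sscal 0 (fun _ => 0))
    by (apply functional_extensionality; intros; unfold sscal; ring).
  rewrite K_scal by (apply in_l2_fin with O; auto). apply hscal_0.
Qed.

Lemma hinner_K_ssub x u v : in_l2 u -> in_l2 v ->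
  hinner x (K (ssub u v)) = hinner x (K u) - hinner x (K v).
Proof.
  intros Hu Hv. rewrite ssub_sadd, K_add, K_scal, hinner_add_r, hinner_scal_r;
    auto using in_l2_sscal. ring.
Qed.

Lemma hinner_K_fin n : forall c, (forall j, (n <= j)%nat -> c j = 0) -> forall y,
  hinner (K c) y = fsum (fun j => c j * hinner (K (unitv j)) y) n.
Proof.
  induction n as [|n IH]; intros c Hc y.
  - replace c with (fun _ : nat => 0)
      by (apply functional_extensionality; intros; symmetry; apply Hc; lia).
    rewrite K_zero. apply hinner_zero_l.
  - set (c' := fun j => if Nat.eq_dec j n then 0 else c j).
    assert (Hc' : forall j, (n <= j)%nat -> c' j = 0).
    { intros j Hj. unfold c'. destruct Nat.eq_dec; auto. apply Hc; lia. }
    replace c with (sadd c' (sscal (c n) (unitv n))) at 1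
      by (apply functional_extensionality; intro j; unfold sadd, sscal, unitv, c';
          destruct Nat.eq_dec; subst; ring).
    rewrite K_add, K_scal, hinner_add_l, hinner_scal_l, (IH c' Hc');
      eauto using in_l2_unitv, in_l2_sscal, in_l2_fin.
    simpl. f_equal. apply fsum_ext. intros j Hj. unfold c'. destruct Nat.eq_dec; [lia|auto].
Qed.

Definition supported_on (n : nat) (P : nat -> bool) (c : seqR) : Prop :=
  forall j, (n <= j)%nat \/ P j = false -> c j = 0.

Lemma supported_on_l2 n P c : supported_on n P c -> in_l2 c.
Proof. intros Hs. apply in_l2_fin with n. intros; apply Hs; auto. Qed.

Definition gram_solvable (n : nat) (P : nat -> bool) : Prop :=
  forall b : seqR, exists c, supported_on n P c /\
    forall k, (k < n)%nat -> P k = true -> hinner (K (unitv k)) (K c) = b k.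

Lemma gram_orth_direction n P : gram_solvable n P -> P n = true ->
  exists e, supported_on (S n) P e /\ e n = 1 /\
    forall k, (k < n)%nat -> P k = true -> hinner (K (unitv k)) (K e) = 0.
Proof.
  intros Hsolv Pn.
  destruct (Hsolv (fun k => hinner (K (unitv k)) (K (unitv n)))) as [c [Hs Hc]].
  exists (ssub (unitv n) c). split; [|split].
  - intros j Hj. unfold ssub, unitv. destruct Nat.eq_dec as [->|]; [destruct Hj; [lia|congruence]|].
    rewrite Hs; [ring|]. destruct Hj; [left; lia | right; auto].
  - unfold ssub, unitv. rewrite (Hs n) by (left; lia). destruct Nat.eq_dec; [ring|congruence].
  - intros k Hk Pk. rewrite hinner_K_ssub, Hc by eauto using in_l2_unitv, supported_on_l2. ring.
Qed.

Lemma gram_solvable_succ n P : gram_solvable n P -> gram_solvable (S n) P.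
Proof.
  intros Hsolv b. destruct (Hsolv b) as [c0 [Hs0 Hc0]].
  destruct (P n) eqn:Pn.
  2:{ exists c0. split.
      - intros j [Hj|Hj]; apply Hs0; [left; lia | right; exact Hj].
      - intros k Hk Pk. destruct (Nat.eq_dec k n) as [->|]; [congruence|]. apply Hc0; auto; lia. }
  destruct (gram_orth_direction n P Hsolv Pn) as [e [Hes [Hen Horth]]].
  assert (He : in_l2 e) by (eapply supported_on_l2; eauto).
  assert (Hc0l : in_l2 c0) by (eapply supported_on_l2; eauto).
  (* Expanding [K e] in the unit vectors, only the [n]-th term survives the orthogonality. *)
  assert (Hee : hinner (K e) (K e) = hinner (K (unitv n)) (K e)).
  { rewrite (hinner_K_fin (S n) e) by (intros; apply Hes; auto). simpl.
    rewrite fsum_zero, Hen; [ring|].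
    intros j Hj. destruct (P j) eqn:Pj; [rewrite Horth by auto | rewrite Hes by auto]; ring. }
  assert (Hnz : hinner (K e) (K e) <> 0).
  { intros Z. apply hinner_def in Z. rewrite <- K_zero in Z.
    apply K_inj in Z; [|exact He | apply in_l2_fin with O; auto].
    rewrite Z in Hen. lra. }
  set (t := (b n - hinner (K (unitv n)) (K c0)) / hinner (K e) (K e)).
  exists (sadd c0 (sscal t e)). split.
  - intros j Hj. unfold sadd, sscal. rewrite Hes, Hs0 by (destruct Hj; [left; lia | auto]). ring.
  - intros k Hk Pk. rewrite K_add, K_scal, hinner_add_r, hinner_scal_r; auto using in_l2_sscal.
    destruct (Nat.eq_dec k n) as [->|Hne].
    + rewrite <- Hee. unfold t. field. exact Hnz.
    + rewrite Horth, Hc0 by (auto; lia). ring.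
Qed.

Lemma gram_solvable_all n P : gram_solvable n P.
Proof.
  induction n as [|n IH]; [|apply gram_solvable_succ, IH].
  intros b. exists (fun _ => 0). split; [intros j _; reflexivity | intros; lia].
Qed.

(** The coordinates of [p] are read off by the dual vectors [d] with
    [<K e_k, K d> = delta_kj], whence a bound through the Gram data [<K e_k, K p>]. *)
Lemma supported_coord_bound n P j : exists M, 0 <= M /\
  forall p B, supported_on n P p -> 0 <= B ->
    (forall k, (k < n)%nat -> P k = true -> Rabs (hinner (K (unitv k)) (K p)) <= B) ->
    Rabs (p j) <= M * B.
Proof.
  destruct (gram_solvable_all n P (unitv j)) as [d [Hds Hd]].
  exists (fsum (fun k => Rabs (d k)) n). split; [apply fsum_nonneg; intros; apply Rabs_pos|].
  intros p B Hs HB Hb.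
  assert (Hpj : hinner (K p) (K d) = p j).
  { rewrite (hinner_K_fin n p) by (intros; apply Hs; auto).
    rewrite (fsum_ext _ (fun m => p m * unitv j m)).
    2:{ intros m Hm. destruct (P m) eqn:Pm; [rewrite Hd | rewrite Hs]; auto; ring. }
    destruct (Compare_dec.lt_dec j n) as [Hj|Hj].
    - rewrite (fsum_single _ _ j Hj); unfold unitv; intros;
        destruct Nat.eq_dec; congruence || ring.
    - rewrite (Hs j) by (left; lia). apply fsum_zero.
      intros m Hm. unfold unitv. destruct Nat.eq_dec; [lia | ring]. }
  rewrite <- Hpj, hinner_sym, (hinner_K_fin n d) by (intros; apply Hds; auto).
  eapply Rle_trans; [apply fsum_abs|]. rewrite Rmult_comm, <- fsum_scal.
  apply fsum_le. intros k Hk. rewrite Rabs_mult, (Rmult_comm B).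
  destruct (P k) eqn:Pk.
  - apply Rmult_le_compat_l; [apply Rabs_pos | apply Hb; auto].
  - rewrite (Hds k) by auto. rewrite Rabs_R0. lra.
Qed.

End GramSystem.

(** * The active-set operator [G] *)

Section ActiveSetOperator.
Context {H : HilbertSpace}.
Variable K : seqR -> H.
Hypothesis K_add : forall u v, in_l2 u -> in_l2 v -> K (sadd u v) = hadd (K u) (K v).
Hypothesis K_scal : forall a u, in_l2 u -> K (sscal a u) = hscal a (K u).
Hypothesis K_inj : injective_l2 K.
Variable C : R.
Hypothesis K_bound : forall u, in_l2 u -> hnorm (K u) <= C * l2norm u.

Lemma hinner_K_unitv_bound k h : in_l2 h ->
  Rabs (hinner (K (unitv k)) (K h)) <= hnorm (K (unitv k)) * (Rabs C * l2norm h).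
Proof.
  intros Hh. eapply Rle_trans; [apply cauchy_schwarz|].
  apply Rmult_le_compat_l; [apply hnorm_ge0|].
  eapply Rle_trans; [apply K_bound, Hh|].
  apply Rmult_le_compat_r; [apply l2norm_ge0 | apply Rle_abs].
Qed.

Variables (P : nat -> bool) (n : nat) (gamma : R).
Hypothesis P_lt : forall k, P k = true -> (k < n)%nat.
Hypothesis gamma_pos : 0 < gamma.

Definition Gop_on (v : seqR) : seqR :=
  fun k => if P k then gamma * adj K (K v) k else v k.

Definition mask (Q : nat -> bool) (v : seqR) : seqR := fun k => if Q k then v k else 0.

Let Pc (k : nat) : bool := negb (P k).

Lemma mask_split v : v = sadd (mask P v) (mask Pc v).
Proof.
  apply functional_extensionality; intro k. unfold sadd, mask, Pc. destruct (P k); simpl; ring.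
Qed.

Lemma in_l2_mask Q v : in_l2 v -> in_l2 (mask Q v).
Proof.
  intros Hv. apply in_l2_le with v; [exact Hv|]. intros j. unfold mask. destruct (Q j); [lra|].
  rewrite pow_i by lia. apply pow2_ge_0.
Qed.

Lemma mask_supported v : supported_on n P (mask P v).
Proof.
  intros j Hj. unfold mask. destruct (P j) eqn:Pj; [|reflexivity].
  destruct Hj as [Hj|Hj]; [apply P_lt in Pj; lia | congruence].
Qed.

Lemma Gop_on_l2 v : in_l2 v -> in_l2 (Gop_on v).
Proof.
  intros Hv. apply in_l2_tail with v n; [exact Hv|]. intros j Hj. unfold Gop_on.
  destruct (P j) eqn:Pj; [apply P_lt in Pj; lia | reflexivity].
Qed.

Lemma Gop_on_surj v : in_l2 v -> exists u, in_l2 u /\ Gop_on u = v.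
Proof.
  intros Hv. set (q := mask Pc v).
  assert (Hq : in_l2 q) by apply in_l2_mask, Hv.
  destruct (gram_solvable_all K K_add K_scal K_inj n P
              (fun k => v k / gamma - hinner (K (unitv k)) (K q))) as [p [Hps Hp]].
  assert (Hpl : in_l2 p) by (eapply supported_on_l2; eauto).
  exists (sadd p q). split; [apply in_l2_sadd; auto|].
  apply functional_extensionality; intro k. unfold Gop_on, adj. destruct (P k) eqn:Pk.
  - rewrite K_add, hinner_add_r, Hp by auto using P_lt. field. lra.
  - unfold sadd, q, mask, Pc. rewrite Hps, Pk by (right; auto). simpl. ring.
Qed.

Lemma mask_compl_sq_le v j : mask Pc v j ^ 2 <= Gop_on v j ^ 2.
Proof.
  unfold mask, Gop_on, Pc.
  destruct (P j); cbn [negb]; [rewrite pow_i by lia; apply pow2_ge_0 | lra].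
Qed.

(** On the active set, [<K e_k, K (P_A v)> = (G v)_k / gamma - <K e_k, K ((I - P_A) v)>],
    and [(I - P_A) v] is dominated coordinatewise by [G v]. *)
Lemma Gop_on_gram_bound v k L : in_l2 v -> P k = true -> hnorm (K (unitv k)) <= L ->
  Rabs (hinner (K (unitv k)) (K (mask P v))) <= (/ gamma + L * Rabs C) * l2norm (Gop_on v).
Proof.
  intros Hv Pk HL.
  assert (Hb : in_l2 (Gop_on v)) by apply Gop_on_l2, Hv.
  assert (Hq : in_l2 (mask Pc v)) by apply in_l2_mask, Hv.
  assert (Hqb : l2norm (mask Pc v) <= l2norm (Gop_on v))
    by (apply l2norm_le_coordwise; [exact Hb | apply mask_compl_sq_le]).
  assert (E : hinner (K (unitv k)) (K (mask P v))
              = Gop_on v k / gamma - hinner (K (unitv k)) (K (mask Pc v))).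
  { unfold Gop_on, adj. rewrite Pk. rewrite (mask_split v) at 2.
    rewrite K_add, hinner_add_r by auto using in_l2_mask. field. lra. }
  rewrite E. eapply Rle_trans; [apply Rabs_triang|]. rewrite Rabs_Ropp.
  unfold Rdiv. rewrite Rabs_mult, (Rabs_pos_eq (/ gamma)) by (left; apply Rinv_0_lt_compat; lra).
  pose proof (coord_le_l2norm _ k Hb).
  pose proof (hinner_K_unitv_bound k _ Hq).
  pose proof (Rabs_pos C). pose proof (l2norm_ge0 (mask Pc v)). pose proof (hnorm_ge0 (K (unitv k))).
  assert (0 < / gamma) by (apply Rinv_0_lt_compat; lra).
  assert (hnorm (K (unitv k)) * (Rabs C * l2norm (mask Pc v)) <= L * (Rabs C * l2norm (Gop_on v)))
    by (apply Rmult_le_compat; nra).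
  nra.
Qed.

Lemma Gop_on_active_coord_bound :
  exists M, 0 <= M /\ forall v j, in_l2 v -> Rabs (mask P v j) <= M * l2norm (Gop_on v).
Proof.
  destruct (finite_common_bound (fun k L => hnorm (K (unitv k)) <= L) n) as [L [HL0 HL]].
  { intros k _. exists (hnorm (K (unitv k))). split; [apply hnorm_ge0 | lra]. }
  { intros; lra. }
  destruct (finite_common_bound (fun j M => forall p B, supported_on n P p -> 0 <= B ->
      (forall k, (k < n)%nat -> P k = true -> Rabs (hinner (K (unitv k)) (K p)) <= B) ->
      Rabs (p j) <= M * B) n) as [M [HM0 HM]].
  { intros j _. apply supported_coord_bound; assumption. }
  { intros k M M' HMM Hq p B Hs HB Hb. eapply Rle_trans; [apply Hq; eauto|].
    apply Rmult_le_compat_r; auto. }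
  set (c := / gamma + L * Rabs C).
  assert (Hc : 0 <= c).
  { pose proof (Rinv_0_lt_compat gamma gamma_pos). pose proof (Rabs_pos C).
    unfold c. pose proof (Rmult_le_pos L (Rabs C) HL0 ltac:(lra)). lra. }
  exists (M * c). split; [apply Rmult_le_pos; assumption|]. intros v j Hv.
  assert (Hb : 0 <= c * l2norm (Gop_on v)) by (apply Rmult_le_pos, l2norm_ge0; exact Hc).
  rewrite Rmult_assoc. destruct (Compare_dec.lt_dec j n) as [Hj|Hj].
  - apply HM; [exact Hj | apply mask_supported | exact Hb|].
    intros k _ Pk. apply Gop_on_gram_bound; auto.
  - rewrite mask_supported by (left; lia). rewrite Rabs_R0. apply Rmult_le_pos; assumption.
Qed.

Lemma Gop_on_bounded_below :
  exists D, 0 < D /\ forall v, in_l2 v -> l2norm v <= D * l2norm (Gop_on v).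
Proof.
  destruct Gop_on_active_coord_bound as [M [HM0 HM]].
  set (D := INR n * M ^ 2 + 1).
  assert (HD : 1 <= D) by (unfold D; pose proof (pos_INR n); pose proof (pow2_ge_0 M); nra).
  exists (sqrt D). split; [apply sqrt_lt_R0; lra|].
  intros v Hv. set (b := Gop_on v). set (p := mask P v). set (q := mask Pc v).
  assert (Hb : in_l2 b) by apply Gop_on_l2, Hv.
  assert (Sp : Series (fun j => p j ^ 2) <= INR n * M ^ 2 * l2norm b ^ 2).
  { rewrite (Series_fin _ n) by (intros j Hj; unfold p; rewrite mask_supported by (left; auto); ring).
    replace (INR n * M ^ 2 * l2norm b ^ 2) with (INR n * (M * l2norm b) ^ 2) by ring.
    apply fsum_le_const. intros j _. rewrite <- (pow2_abs (p j)).
    apply pow_incr. split; [apply Rabs_pos | apply HM, Hv]. }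
  assert (Sq : Series (fun j => q j ^ 2) <= l2norm b ^ 2).
  { rewrite l2norm_sq by exact Hb. apply Series_le; [|exact Hb]. intros j.
    split; [apply pow2_ge_0 | apply mask_compl_sq_le]. }
  assert (Sv : Series (fun j => v j ^ 2) = Series (fun j => p j ^ 2) + Series (fun j => q j ^ 2)).
  { rewrite <- Series_plus by (apply in_l2_mask, Hv). apply Series_ext. intro j.
    unfold p, q, mask, Pc. destruct (P j); simpl; ring. }
  unfold l2norm at 1. rewrite <- (sqrt_pow2 (l2norm b)) by apply l2norm_ge0.
  rewrite <- sqrt_mult by (lra || apply pow2_ge_0).
  apply sqrt_le_1_alt. rewrite Sv. unfold D. nra.
Qed.

Lemma Gop_on_invertible : invertible_l2 Gop_on.
Proof.
  split; [exact Gop_on_l2 | split; [exact Gop_on_surj | exact Gop_on_bounded_below]].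
Qed.

End ActiveSetOperator.

(** * Scalar optimality conditions *)

Lemma nonneg_of_small_quadratic c a delta : 0 < delta -> 0 <= a ->
  (forall s, 0 < s < delta -> 0 <= s * c + s ^ 2 * a) -> 0 <= c.
Proof.
  intros Hd Ha Hs. destruct (Rle_or_lt 0 c) as [|Hc]; [assumption|exfalso].
  set (s := Rmin (delta / 2) (- c / (a + 1))).
  assert (Hs1 : 0 < s) by (apply Rmin_glb_lt; [lra | apply Rdiv_lt_0_compat; lra]).
  assert (Hs2 : s <= delta / 2) by apply Rmin_l.
  assert (Hs3 : s * (a + 1) <= - c).
  { assert (Hm : s <= - c / (a + 1)) by apply Rmin_r.
    apply (Rmult_le_compat_r (a + 1)) in Hm; [|lra].
    unfold Rdiv in Hm. rewrite Rmult_assoc, Rinv_l in Hm; lra. }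
  specialize (Hs s ltac:(lra)). nra.
Qed.

(** [0 \in g + w d|.|(b)]. *)
Definition zero_in_subdiff (g w b : R) : Prop :=
  (0 < b -> g = - w) /\ (b < 0 -> g = w) /\ (b = 0 -> Rabs g <= w).

Lemma zero_in_subdiff_of_local_min b g w a : 0 < w -> 0 <= a ->
  (forall t, 0 <= t * g + t ^ 2 * a + w * (Rabs (b + t) - Rabs b)) ->
  zero_in_subdiff g w b.
Proof.
  intros Hw Ha Ht.
  split; [|split].
  - intros Hb. enough (0 <= g + w /\ 0 <= - (g + w)) by lra. split;
      apply (nonneg_of_small_quadratic _ a b Hb Ha); intros s Hs;
      [specialize (Ht s) | specialize (Ht (- s))];
      rewrite Rabs_pos_eq, (Rabs_pos_eq b) in Ht by lra; nra.
  - intros Hb. enough (0 <= g - w /\ 0 <= - (g - w)) by lra. split;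
      apply (nonneg_of_small_quadratic _ a (- b) ltac:(lra) Ha); intros s Hs;
      [specialize (Ht s) | specialize (Ht (- s))];
      rewrite Rabs_left, (Rabs_left b) in Ht by lra; nra.
  - intros ->. enough (0 <= g + w /\ 0 <= - g + w) by (apply Rabs_le; lra). split;
      apply (nonneg_of_small_quadratic _ a 1 ltac:(lra) Ha); intros s Hs;
      [specialize (Ht s) | specialize (Ht (- s))];
      rewrite Rplus_0_l, Rabs_R0 in Ht;
      [rewrite Rabs_pos_eq in Ht | rewrite Rabs_left in Ht]; lra || nra.
Qed.

Lemma soft_threshold_pattern_stable b g w gamma : 0 < w -> 0 < gamma ->
  zero_in_subdiff g w b ->
  exists delta, 0 < delta /\ forall x, Rabs (x - (b - gamma * g)) < delta ->
    (b <> 0 -> gamma * w < Rabs x) /\ (gamma * w < Rabs x -> g = - w * sgn x).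
Proof.
  intros Hw Hg [Hpos [Hneg Hzero]].
  assert (Hgw : 0 < gamma * w) by nra.
  unfold sgn.
  destruct (Rtotal_order b 0) as [Hb|[Hb|Hb]].
  - rewrite (Hneg Hb). exists (- b). split; [lra|]. intros x Hx.
    apply Rabs_def2 in Hx. assert (x < 0) by nra. rewrite Rabs_left by auto.
    split; [intros; nra|]. intros _.
    destruct (Rlt_dec 0 x); [lra|]. destruct (Rlt_dec x 0); [ring|lra].
  - subst b. specialize (Hzero eq_refl).
    destruct (Rlt_or_le (Rabs g) w) as [Hlt|Hge].
    + exists (gamma * w - gamma * Rabs g). split; [nra|]. intros x Hx.
      split; [congruence|]. intros Hx2. exfalso.
      pose proof (Rabs_triang_inv x (0 - gamma * g)) as Htri.
      rewrite Rminus_0_l, Rabs_Ropp, Rabs_mult, (Rabs_pos_eq gamma) in Htri by lra.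
      rewrite Rminus_0_l in Hx. lra.
    + exists (gamma * w). split; [exact Hgw|]. intros x Hx. split; [congruence|]. intros _.
      assert (Hg2 : Rabs g = w) by lra. apply Rabs_def2 in Hx.
      destruct (Rcase_abs g) as [Hgn|Hgp].
      * rewrite Rabs_left in Hg2 by auto. assert (0 < x) by nra.
        destruct (Rlt_dec 0 x); lra.
      * rewrite Rabs_pos_eq in Hg2 by lra. assert (x < 0) by nra.
        destruct (Rlt_dec 0 x); [lra|]. destruct (Rlt_dec x 0); lra.
  - rewrite (Hpos Hb). exists b. split; [lra|]. intros x Hx.
    apply Rabs_def2 in Hx. assert (0 < x) by nra. rewrite Rabs_pos_eq by lra.
    split; [intros; nra|]. intros _. destruct (Rlt_dec 0 x); [ring|lra].
Qed.

Lemma abs_mul_sgn x : Rabs x * sgn x = x.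
Proof.
  unfold sgn. destruct (Rlt_dec 0 x); [rewrite Rabs_pos_eq by lra; ring|].
  destruct (Rlt_dec x 0); [rewrite Rabs_left by lra; ring|].
  replace x with 0 by lra. ring.
Qed.

(** * The Newton step near the minimizer *)

Section NewtonStep.
Context {H : HilbertSpace}.
Variables (K : seqR -> H) (f : H) (w : seqR) (gamma : R) (ub : seqR).
Hypothesis K_add : forall u v, in_l2 u -> in_l2 v -> K (sadd u v) = hadd (K u) (K v).
Hypothesis K_scal : forall a u, in_l2 u -> K (sscal a u) = hscal a (K u).
Hypothesis w_pos : forall k, 0 < w k.
Hypothesis gamma_pos : 0 < gamma.
Hypothesis ub_min : is_minimizer K f w ub.

Let g : seqR := adj K (hsub (K ub) f).

(** Comparing [Psi] at [ub] and at [ub + t e_k]. *)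
Lemma minimizer_coord_perturb k t :
  0 <= t * g k + t ^ 2 * (hinner (K (unitv k)) (K (unitv k)) / 2)
       + w k * (Rabs (ub k + t) - Rabs (ub k)).
Proof.
  destruct ub_min as [Hub [Hpen Hmin]].
  set (u := sadd ub (sscal t (unitv k))).
  assert (Hu : in_l2 u) by (apply in_l2_sadd, in_l2_sscal, in_l2_unitv; exact Hub).
  assert (Hpu : penalty_finite w u).
  { apply (ex_series_tail _ _ (S k) Hpen). intros j Hj.
    unfold u, sadd, sscal, unitv. destruct Nat.eq_dec; [lia|]. rewrite Rmult_0_r, Rplus_0_r. reflexivity. }
  specialize (Hmin u Hu Hpu). unfold Psi in Hmin.
  set (d := fun j => if Nat.eq_dec j k then w k * (Rabs (ub k + t) - Rabs (ub k)) else 0).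
  assert (Hd : forall j, (S k <= j)%nat -> d j = 0)
    by (intros j Hj; unfold d; destruct Nat.eq_dec; [lia|reflexivity]).
  assert (Su : Series (fun j => w j * Rabs (u j))
               = Series (fun j => w j * Rabs (ub j)) + Series d).
  { rewrite <- Series_plus by (exact Hpen || exact (ex_series_fin d (S k) Hd)).
    apply Series_ext. intros j.
    unfold u, d, sadd, sscal, unitv.
    destruct Nat.eq_dec; [subst; rewrite Rmult_1_r | rewrite Rmult_0_r, Rplus_0_r]; ring. }
  assert (Sd : Series d = w k * (Rabs (ub k + t) - Rabs (ub k))).
  { rewrite (Series_fin _ (S k) Hd), (fsum_single _ _ k); unfold d; try lia;
      intros; destruct Nat.eq_dec; congruence. }
  rewrite Su, Sd, !hnorm_sq in Hmin.
  unfold u in Hmin. rewrite K_add, K_scal in Hmin; auto using in_l2_unitv, in_l2_sscal.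
  unfold g, adj, hsub in *. rewrite !hopp_scal in *.
  rewrite !hinner_add_l, !hinner_add_r, !hinner_scal_l, !hinner_scal_r in *.
  rewrite (hinner_sym _ (K ub) (K (unitv k))), (hinner_sym _ f (K (unitv k))) in Hmin.
  nra.
Qed.

Lemma minimizer_stationary k : zero_in_subdiff (g k) (w k) (ub k).
Proof.
  apply (zero_in_subdiff_of_local_min _ _ _ (hinner (K (unitv k)) (K (unitv k)) / 2)).
  - apply w_pos.
  - pose proof (hinner_pos H (K (unitv k))). lra.
  - apply minimizer_coord_perturb.
Qed.

Lemma Gop_newton_coord u k : in_l2 u ->
  (ub k <> 0 -> gamma * w k < Rabs (fwd K f gamma u k)) ->
  (gamma * w k < Rabs (fwd K f gamma u k) -> g k = - w k * sgn (fwd K f gamma u k)) ->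
  Gop K f gamma w u (ssub u ub) k = Fmap K f gamma w u k.
Proof.
  intros Hu Hsupp Hsign. destruct ub_min as [Hub _].
  unfold Gop, Fmap, adj. rewrite (hinner_K_ssub K K_add K_scal) by assumption.
  unfold ssub, soft, sscal. set (x := fwd K f gamma u k) in *.
  destruct Rlt_dec as [Hk|Hk].
  - rewrite Rmax_right by lra. specialize (Hsign Hk).
    replace ((Rabs x - gamma * w k) * sgn x) with (x - gamma * w k * sgn x)
      by (rewrite <- (abs_mul_sgn x) at 1; ring).
    assert (Ex : x = u k - gamma * (hinner (K (unitv k)) (K u) - hinner (K (unitv k)) f))
      by (unfold x, fwd, adj; rewrite hinner_sub_r; reflexivity).
    assert (Eg : g k = hinner (K (unitv k)) (K ub) - hinner (K (unitv k)) f)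
      by (unfold g, adj; apply hinner_sub_r).
    set (s := sgn x) in *. rewrite Ex.
    replace (hinner (K (unitv k)) (K ub)) with (hinner (K (unitv k)) f - w k * s) by lra.
    ring.
  - rewrite Rmax_left by lra.
    destruct (Req_dec (ub k) 0) as [->|Hne]; [ring | exfalso; apply Hk, Hsupp, Hne].
Qed.

Variable C : R.
Hypothesis K_bound : forall u, in_l2 u -> hnorm (K u) <= C * l2norm u.

Lemma fwd_coord_lipschitz u k : in_l2 u ->
  Rabs (fwd K f gamma u k - fwd K f gamma ub k)
    <= (1 + gamma * hnorm (K (unitv k)) * Rabs C) * l2norm (ssub u ub).
Proof.
  intros Hu. destruct ub_min as [Hub _].
  assert (Hd : in_l2 (ssub u ub)) by (apply in_l2_ssub; assumption).
  replace (fwd K f gamma u k - fwd K f gamma ub k)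
    with (ssub u ub k - gamma * hinner (K (unitv k)) (K (ssub u ub))).
  2:{ rewrite (hinner_K_ssub K K_add K_scal) by assumption.
      unfold fwd, adj, ssub. rewrite !hinner_sub_r. ring. }
  eapply Rle_trans; [apply Rabs_triang|].
  rewrite Rabs_Ropp, Rabs_mult, (Rabs_pos_eq gamma) by lra.
  pose proof (coord_le_l2norm _ k Hd).
  pose proof (hinner_K_unitv_bound K C K_bound k _ Hd).
  pose proof (l2norm_ge0 (ssub u ub)). pose proof (hnorm_ge0 (K (unitv k))).
  pose proof (Rabs_pos C). nra.
Qed.

Lemma sign_pattern_near_minimizer k : exists d, 0 < d /\
  forall u, in_l2 u -> l2norm (ssub u ub) < d ->
    (ub k <> 0 -> gamma * w k < Rabs (fwd K f gamma u k)) /\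
    (gamma * w k < Rabs (fwd K f gamma u k) -> g k = - w k * sgn (fwd K f gamma u k)).
Proof.
  destruct (soft_threshold_pattern_stable (ub k) (g k) (w k) gamma (w_pos k) gamma_pos
              (minimizer_stationary k)) as [delta [Hdelta Hstab]].
  set (L := 1 + gamma * hnorm (K (unitv k)) * Rabs C).
  assert (HL : 1 <= L).
  { unfold L. pose proof (hnorm_ge0 (K (unitv k))). pose proof (Rabs_pos C).
    pose proof (Rmult_le_pos _ _ (Rmult_le_pos _ _ (Rlt_le _ _ gamma_pos) H0) H1). lra. }
  exists (delta / L). split; [apply Rdiv_lt_0_compat; lra|].
  intros u Hu Hd. apply Hstab.
  replace (ub k - gamma * g k) with (fwd K f gamma ub k) by reflexivity.
  eapply Rle_lt_trans; [apply fwd_coord_lipschitz, Hu|]. fold L.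
  apply (Rmult_lt_compat_l L) in Hd; [|lra].
  replace (L * (delta / L)) with delta in Hd by (field; lra). exact Hd.
Qed.

Hypothesis K_inj : injective_l2 K.
Variables (k0 : nat) (rho : R).
Hypothesis rho_pos : 0 < rho.
Hypothesis active_lt : forall u, in_l2 u -> l2norm (ssub u ub) < rho ->
  forall k, active K f gamma w u k -> (k < k0)%nat.

Lemma minimizer_support_lt k : ub k <> 0 -> (k < k0)%nat.
Proof.
  intros Hk. destruct ub_min as [Hub _].
  apply (active_lt ub Hub ltac:(rewrite l2norm_ssub_diag; lra) k).
  destruct (soft_threshold_pattern_stable (ub k) (g k) (w k) gamma (w_pos k) gamma_pos
              (minimizer_stationary k)) as [delta [Hdelta Hstab]].
  apply (Hstab (fwd K f gamma ub k)); [|exact Hk].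
  unfold fwd. fold g. rewrite Rminus_diag, Rabs_R0. exact Hdelta.
Qed.

Lemma Gop_invertible_near u : in_l2 u -> l2norm (ssub u ub) < rho ->
  invertible_l2 (Gop K f gamma w u).
Proof.
  intros Hu Hd.
  set (P := fun k => if Rlt_dec (gamma * w k) (Rabs (fwd K f gamma u k)) then true else false).
  replace (Gop K f gamma w u) with (Gop_on K P gamma).
  - apply (Gop_on_invertible K K_add K_scal K_inj C K_bound P k0); [|exact gamma_pos].
    intros k Pk. apply (active_lt u Hu Hd k). unfold P in Pk. unfold active.
    destruct Rlt_dec; [assumption | discriminate].
  - apply functional_extensionality; intro v; apply functional_extensionality; intro k.
    unfold Gop_on, Gop, P. destruct Rlt_dec; reflexivity.
Qed.

Lemma Gop_newton_identity_near : exists d, 0 < d /\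
  forall u, in_l2 u -> l2norm (ssub u ub) < d -> l2norm (ssub u ub) < rho ->
    Gop K f gamma w u (ssub u ub) = Fmap K f gamma w u.
Proof.
  destruct (finite_common_radius (fun k d => forall u, in_l2 u -> l2norm (ssub u ub) < d ->
      (ub k <> 0 -> gamma * w k < Rabs (fwd K f gamma u k)) /\
      (gamma * w k < Rabs (fwd K f gamma u k) -> g k = - w k * sgn (fwd K f gamma u k))) k0)
    as [d [Hd Hpat]].
  { intros k _. apply sign_pattern_near_minimizer. }
  { intros k d d' Hdd Hq u Hu Hud. apply Hq; [exact Hu | lra]. }
  exists d. split; [exact Hd|]. intros u Hu Hud Hur.
  apply functional_extensionality; intro k. apply Gop_newton_coord; [exact Hu| |].
  all: destruct (Compare_dec.lt_dec k k0) as [Hk|Hk]; [apply (Hpat k Hk u Hu Hud)|].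
  - intros Hne. exfalso. apply Hk, minimizer_support_lt, Hne.
  - intros Hact. exfalso. apply Hk, (active_lt u Hu Hur k), Hact.
Qed.

End NewtonStep.

Theorem theorem3p13 (H : HilbertSpace) (K : seqR -> H) (f : H)
  (w : seqR) (w0 gamma : R) (ub : seqR) (rho : R) (k0 : nat) :
  bounded_linear_l2 K -> injective_l2 K ->
  0 < w0 -> (forall k, w0 <= w k) -> 0 < gamma ->
  is_minimizer K f w ub ->
  0 < rho ->
  (forall u, in_l2 u -> l2norm (ssub u ub) < rho ->
     forall k, active K f gamma w u k -> (k < k0)%nat) ->
  exists r, 0 < r <= rho /\
    forall u0, in_l2 u0 -> l2norm (ssub u0 ub) < r ->
    exists us : nat -> seqR,
      us O = u0 /\
      (forall n,
         in_l2 (us n) /\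
         l2norm (ssub (us n) ub) < r /\
         invertible_l2 (Gop K f gamma w (us n)) /\
         Gop K f gamma w (us n) (ssub (us n) (us (S n))) = Fmap K f gamma w (us n)) /\
      is_lim_seq (fun n => l2norm (ssub (us n) ub)) 0 /\
      (forall eps, 0 < eps -> exists N, forall n, (N <= n)%nat ->
         l2norm (ssub (us (S n)) ub) <= eps * l2norm (ssub (us n) ub)).
Proof.
  intros [K_add [K_scal [C K_bound]]] K_inj Hw0 Hw Hg Hmin Hrho Hact.
  assert (w_pos : forall k, 0 < w k) by (intro k; specialize (Hw k); lra).
  destruct (Gop_newton_identity_near K f w gamma ub K_add K_scal w_pos Hg Hmin C K_bound
              k0 rho Hrho Hact) as [d [Hd Hnewton]].
  set (r := Rmin rho d).
  assert (Hr : 0 < r) by (apply Rmin_glb_lt; assumption).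
  assert (Hr_rho : r <= rho) by apply Rmin_l.
  assert (Hr_d : r <= d) by apply Rmin_r.
  assert (Hstep : forall u, in_l2 u -> l2norm (ssub u ub) < r ->
            invertible_l2 (Gop K f gamma w u) /\ Gop K f gamma w u (ssub u ub) = Fmap K f gamma w u).
  { intros u Hu Hur. split.
    - apply (Gop_invertible_near K f w gamma ub K_add K_scal Hg C K_bound K_inj k0 rho Hact);
        [exact Hu | lra].
    - apply Hnewton; [exact Hu | lra | lra]. }
  exists r. split; [split; assumption|]. intros u0 Hu0 Hu0r.
  (* The first Newton step already lands on the minimizer, which is a fixed point. *)
  exists (fun n => match n with O => u0 | S _ => ub end).
  destruct Hmin as [Hub _].
  assert (Hub_r : l2norm (ssub ub ub) < r) by (rewrite l2norm_ssub_diag; exact Hr).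
  split; [reflexivity | split; [|split]].
  - intros [|n]; [split; [|split] | split; [|split]]; auto.
  - apply is_lim_seq_incr_1, (is_lim_seq_ext (fun _ => 0)); [|apply is_lim_seq_const].
    intros n. symmetry. apply l2norm_ssub_diag.
  - intros eps Heps. exists 1%nat. intros n Hn. rewrite l2norm_ssub_diag.
    apply Rmult_le_pos; [lra | apply l2norm_ge0].
Qed.
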